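(* Let $\Gamma$ be a countably infinite group acting minimally and continuously on a compact metrizable space $X$ such that $X$ consists of more than one $\Gamma$-orbit. Let $x_1\in X$ have trivial stabilizer, and let $f:X\setminus\{x_1\}\to\{1,-1\}$ be continuous and not extendable to a continuous function on $X$. Let $\Gamma\curvearrowright X_f$ and $\pi_f:X_f\to X$ be the associated McMahon extension. Set $X_+=f^{-1}(1)$ and $X_-=f^{-1}(-1)$. Then $\Gamma\curvearrowright X_f$ is null if and only if $\Gamma\curvearrowright X$ is null and the pair $(X_+,X_-)$ does not have arbitrarily large finite independence sets.
   Context: McMahon extension: there is a minimal continuous action $\Gamma\curvearrowright X_f$ on a compact metrizable space with a $\Gamma$-equivariant continuous surjection $\pi_f:X_f\to X$ such that $\pi_f^{-1}(x)$ is one point for $x\notin\Gamma x_1$ and two points for $x\in\Gamma x_1$, and $f\circ\pi_f$ on $X_f\setminus\pi_f^{-1}(x_1)$ extends to a continuous $\tilde f:X_f\to\{1,-1\}$; it is unique up to conjugacy as an extension of $X$. Concretely: pick $x_0\in X\setminus\Gamma x_1$, let $W$ be the Stone–Čech compactification of $\Gamma x_0$ (with topology from $X$), $\pi_W:W\to X$ the extension of the inclusion, $f_W$ the continuous extension of $f\circ\pi_W|_{\Gamma x_0}$ to $W$; define $w_1\sim w_2$ iff $\pi_W(w_1)=\pi_W(w_2)$ and $f_W(sw_1)=f_W(sw_2)$ for all $s\in\Gamma$; then $X_f=W/\!\sim$. For subsets $A_1,A_2\subseteq X$, a set $M\subseteq\Gamma$ is an independence set for $(A_1,A_2)$ if $\bigcap_{s\in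 F}s^{-1}A_{\omega(s)}\neq\emptyset$ for every nonempty finite $F\subseteq M$ and every $\omega\in\{1,2\}^F$. Null: for every sequence $\mathfrak s=\{s_n\}$ in $\Gamma$ and finite open cover $\mathcal U$, $\limsup_n\frac1n\log N(\bigvee_{i=1}^n s_i^{-1}\mathcal U)=0$, $N$ the minimal size of a subcover. *)

From HB Require Import structures.
From mathcomp Require Import all_boot all_order all_algebra.
From mathcomp Require Import all_classical all_reals all_analysis.
Set Implicit Arguments. Unset Strict Implicit. Unset Printing Implicit Defensive.
Import Order.TTheory GRing.Theory Num.Theory numFieldNormedType.Exports.
Local Open Scope classical_set_scope.
Local Open Scope ring_scope.

Section Dyn.
Variables (G : groupType) (X : topologicalType).

Definition is_action (a : G -> X -> X) : Prop :=
  (forall x, a 1%g x = x) /\ (forall g h x, a (g * h)%g x = a g (a h x)).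

Definition continuous_action (a : G -> X -> X) : Prop :=
  is_action a /\ forall g, continuous (a g).

Definition act_orbit (a : G -> X -> X) (x : X) : set X := [set a g x | g in setT].

Definition minimal_action (a : G -> X -> X) : Prop :=
  forall x, closure (act_orbit a x) = setT.

(* independence set M for the pair (A1, A2): for every nonempty finite F ⊆ M
   and every choice function ω : F -> {1,2} (encoded by bool, true = 1),
   the intersection of s^{-1} A_{ω(s)} over s ∈ F is nonempty *)
Definition indep_set (a : G -> X -> X) (A1 A2 : set X) (M : set G) : Prop :=
  forall F : set G, finite_set F -> F !=set0 -> F `<=` M ->
  forall w : G -> bool,
    \bigcap_(s in F) (a s @^-1` (if w s then A1 else A2)) !=set0.

Definition arb_large_indep (a : G -> X -> X) (A1 A2 : set X) : Prop :=
  forall n : nat, exists M : set G,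
    [/\ finite_set M, indep_set a A1 A2 M &
        exists e : 'I_n -> G, injective e /\ range e `<=` M].

Variable R : realType.

(* N(V): minimal cardinality of a subcover of the family V (+oo if none) *)
Definition Ncov (V : set (set X)) : \bar R :=
  ereal_inf [set (n%:R)%:E | n in
    [set n : nat | exists F : 'I_n -> set X,
        (forall j, V (F j)) /\ setT `<=` \bigcup_(j in setT) F j]].

Definition join_cover (a : G -> X -> X) (U : set (set X)) (s : nat -> G)
    (n : nat) : set (set X) :=
  [set B | exists W : nat -> set X,
      (forall i, (0 < i <= n)%N -> U (W i)) /\
      B = \bigcap_(i in [set i : nat | (0 < i <= n)%N]) (a (s i) @^-1` W i)].

Definition null_action (a : G -> X -> X) : Prop :=
  forall (s : nat -> G) (U : set (set X)),
    finite_set U -> (forall A, U A -> open A) ->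
    setT `<=` \bigcup_(A in U) A ->
    limn_esup (fun n : nat =>
      ((ln (fine (Ncov (join_cover a U s n))) / n%:R)%:E)) = 0%E.

End Dyn.

(* Nullness passes to the factor X, since pulling covers back along pi does not
   change the size of joins.  Write f~ for the +-1 lift of f to X_f.  A finite
   set of group elements along which f~ realises every sign pattern is exactly a
   finite independence set of (X+, X-).  If such sets are unbounded, stringing
   larger and larger ones into one sequence forces joins of n translates of the
   cover {f~ > 0, f~ < 0} to have about 2^(n/2) elements, so X_f is not null.
   Conversely, near every x in X a member of a given open cover of X_f containing
   a point of X_f is selected by the sign of f~ at a fixed translate of that point:
   off the orbit of x1 the fibre is a point, and on it the two points of a fibre
   are told apart by f~ once moved to the fibre of x1, as f has no continuous
   extension.  So a join cover of X_f is a join cover of X refined by the sign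
   patterns of f~ along the sequence, and by the Sauer-Shelah lemma bounded
   independence sets make the number of these patterns polynomial in n. *)

From HB Require Import structures.
From mathcomp Require Import all_boot all_order.
Set Implicit Arguments. Unset Strict Implicit. Unset Printing Implicit Defensive.

Section Shattering.
Variable U : finType.
Implicit Types (S : {set {ffun U -> bool}}) (E : {set U}) (u : U).

Definition shatters S E :=
  [forall g : {ffun U -> bool}, [exists p in S, [forall u in E, p u == g u]]].

Lemma shattersS S S' E : S \subset S' -> shatters S E -> shatters S' E.
Proof.
move=> sSS' /forallP shS; apply/forallP => g.
have /exists_inP[p pS pg] := shS g.
by apply/exists_inP; exists p; first exact: (subsetP sSS').
Qed.

Lemma shatters0 S : S != set0 -> shatters S set0.
Proof.
case/set0Pn => p pS; apply/forallP => g.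
by apply/exists_inP; exists p => //; apply/forall_inP => u; rewrite inE.
Qed.

Lemma shatters_const S E u (c : bool) :
  {in S, forall p : {ffun U -> bool}, p u = c} -> shatters S E -> u \notin E.
Proof.
move=> Sc /forallP/(_ [ffun=> ~~ c])/exists_inP[p pS /forall_inP pc].
by apply/negP => /pc; rewrite ffunE Sc //; case: (c).
Qed.

Lemma shattersU1 S E u :
  shatters [set p in S | p u] E -> shatters [set p in S | ~~ p u] E ->
  shatters S (u |: E).
Proof.
move=> /forallP sh1 /forallP sh0; apply/forallP => g.
have [p /andP[pS /eqP pu] /forall_inP pg] : exists2 p, (p \in S) && (p u == g u)
    & [forall v in E, p v == g v].
  case gu: (g u); [have /exists_inP[p] := sh1 g|have /exists_inP[p] := sh0 g];
    by rewrite inE => /andP[pS pu] pg; exists p; rewrite // pS; move: pu; case: (p u).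
apply/exists_inP; exists p => //; apply/forall_inP => v.
by case/setU1P => [->|/pg]; rewrite ?pu.
Qed.

Lemma card_shatters_split S u :
  #|[set E | shatters [set p in S | p u] E]| +
  #|[set E | shatters [set p in S | ~~ p u] E]| <= #|[set E | shatters S E]|.
Proof.
set Sh1 := [set E | _]; set Sh0 := [set E | _].
have u_notin1 E : E \in Sh1 -> u \notin E.
  rewrite /Sh1 inE; apply: (@shatters_const _ _ u true) => p.
  by rewrite inE => /andP[].
have u_notin0 E : E \in Sh0 -> u \notin E.
  rewrite /Sh0 inE; apply: (@shatters_const _ _ u false) => p.
  by rewrite inE => /andP[_ /negbTE].
pose Q := [set u |: E | E in Sh1 :&: Sh0].
have cardQ : #|Q| = #|Sh1 :&: Sh0|.
  apply: card_in_imset => E E' /setIP[E1 _] /setIP[E'1 _] EE'.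
  by rewrite -(setU1K (u_notin1 _ E1)) -(setU1K (u_notin1 _ E'1)) EE'.
have disjQ : [disjoint Sh1 :|: Sh0 & Q].
  apply/pred0P => F /=; apply/negbTE/negP => /andP[/setUP F01 /imsetP[E _ FE]].
  move: F01; rewrite FE.
  by case=> [/u_notin1|/u_notin0]; rewrite setU11.
have subS : (Sh1 :|: Sh0) :|: Q \subset [set E | shatters S E].
  apply/subsetP => F /setUP[/setUP[]|/imsetP[E]]; rewrite !inE.
  - by apply: shattersS; apply/subsetP => p; rewrite inE => /andP[].
  - by apply: shattersS; apply/subsetP => p; rewrite inE => /andP[].
  - by case/andP => sh1 sh0 ->; exact: shattersU1.
rewrite -cardsUI -cardQ; move: disjQ; rewrite -(leq_card_setU _ Q).2 => /eqP <-.
exact: subset_leq_card.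
Qed.

Lemma pajor S : #|S| <= #|[set E | shatters S E]|.
Proof.
elim: {S}_.+1 {-2}S (ltnSn #|S|) => // n IH S.
rewrite ltnS => Sn; have [S1|] := leqP #|S| 1.
  have [-> | S0] := eqVneq S set0; first by rewrite cards0.
  apply: leq_trans S1 _; rewrite card_gt0; apply/set0Pn; exists set0.
  by rewrite inE; exact: shatters0.
case/card_gt1P => p [q [pS qS pq]].
have [u puq] : exists u, p u != q u.
  apply/existsP; rewrite -negb_forall; apply: contra pq => /forallP pq.
  by apply/eqP/ffunP => v; apply/eqP/pq.
have [r1 [r0 [r1S r0S r1u r0u]]] :
    exists r1 r0, [/\ r1 \in S, r0 \in S, r1 u & ~~ r0 u].
  by move: puq; case pu: (p u); case qu: (q u) => //= _;
    [exists p, q | exists q, p]; rewrite ?pu ?qu.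
have sub_S (P : pred {ffun U -> bool}) : [set r in S | P r] \subset S.
  by apply/subsetP => r; rewrite inE => /andP[].
have lt1 : #|[set r in S | r u]| < #|S|.
  apply/proper_card/properP; split; first exact: sub_S.
  by exists r0; rewrite // inE (negbTE r0u) andbF.
have lt0 : #|[set r in S | ~~ r u]| < #|S|.
  apply/proper_card/properP; split; first exact: sub_S.
  by exists r1; rewrite // inE r1u andbF.
pose Su := [set r : {ffun U -> bool} | r u].
rewrite -(cardsID Su S).
have <- : [set r in S | r u] = S :&: Su by apply/setP => r; rewrite !inE.
have <- : [set r in S | ~~ r u] = S :\: Su by apply/setP => r; rewrite !inE andbC.
apply: leq_trans (card_shatters_split S u).
by apply: leq_add; apply: IH; [apply: leq_trans lt1 Sn | apply: leq_trans lt0 Sn].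
Qed.

Lemma card_small_sets d : #|[set E : {set U} | #|E| <= d]| <= #|U|.+1 ^ d.
Proof.
elim: d => [|d IH].
  rewrite (@eq_card _ _ (pred1 set0)) ?card1 // => E.
  by rewrite !inE leqn0 cards_eq0.
pose add1 := [set p.1 |: p.2 | p in setX [set: U] [set E : {set U} | #|E| <= d]].
have sub : [set E : {set U} | #|E| <= d.+1] \subset
    [set E : {set U} | #|E| <= d] :|: add1.
  apply/subsetP => E; rewrite !inE leq_eqVlt ltnS => /orP[/eqP cE|->//].
  have [u uE] : exists u, u \in E by apply/set0Pn; rewrite -card_gt0 cE.
  apply/orP; right; apply/imsetP; exists (u, E :\ u); last by rewrite /= setD1K.
  by rewrite !inE /=; move: cE; rewrite (cardsD1 u) uE add1n => -[->].
apply: leq_trans (subset_leq_card sub) _; apply: leq_trans (leq_card_setU _ _) _.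
apply: leq_trans (leq_add (leqnn _) (leq_imset_card _ _)) _.
rewrite cardsX cardsT expnS -{1}(mul1n #|_|) -mulnDl add1n.
exact: leq_mul.
Qed.

Lemma sauer_shelah S d :
  (forall E, shatters S E -> #|E| <= d) -> #|S| <= #|U|.+1 ^ d.
Proof.
move=> small; apply: leq_trans (pajor S) _; apply: leq_trans (card_small_sets d).
by apply: subset_leq_card; apply/subsetP => E; rewrite !inE => /small.
Qed.

End Shattering.

From mathcomp Require Import all_algebra all_classical all_reals all_analysis.
From mathcomp Require Import finmap lra zify.
Import Order.TTheory GRing.Theory Num.Theory numFieldNormedType.Exports.
Local Open Scope classical_set_scope.
Local Open Scope ring_scope.

Section Orbits.
Variables (G : groupType) (X : topologicalType) (a : G -> X -> X).
Hypothesis act_a : is_action a.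

Lemma act1 x : a 1%g x = x. Proof. by case: act_a. Qed.

Lemma actM g h x : a (g * h)%g x = a g (a h x). Proof. by case: act_a. Qed.

Lemma actKV g x : a g^-1 (a g x) = x. Proof. by rewrite -actM mulVg act1. Qed.

Lemma act_inj g : injective (a g).
Proof. by move=> x y /(congr1 (a g^-1)); rewrite !actKV. Qed.

Lemma act_orbit_refl x : act_orbit a x x.
Proof. by exists 1%g; rewrite ?act1. Qed.

Lemma act_orbit_trans x y z :
  act_orbit a x y -> act_orbit a y z -> act_orbit a x z.
Proof. by case=> g _ <- [h _ <-]; exists (h * g)%g; rewrite ?actM. Qed.

Lemma act_orbit_sym x y : act_orbit a x y -> act_orbit a y x.
Proof. by case=> g _ <-; exists g^-1%g; rewrite ?actKV. Qed.

Lemma act_orbit_act x y g : act_orbit a x (a g y) <-> act_orbit a x y.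
Proof.
split=> [|xy]; last by apply: act_orbit_trans xy _; exists g.
by move/act_orbit_trans; apply; exists g^-1%g; rewrite ?actKV.
Qed.

Lemma exists_not_act_orbit x :
  (exists y z, ~ act_orbit a y z) -> exists y, ~ act_orbit a x y.
Proof.
case=> y [z nyz]; apply: contrapT => /forallNP all_orb; apply: nyz.
apply: (@act_orbit_trans _ x); last by apply: contrapT; exact: all_orb.
by apply: act_orbit_sym; apply: contrapT; exact: all_orb.
Qed.

End Orbits.

Section ClosedMaps.
Context {T U : topologicalType} (p : T -> U).
Hypotheses (cT : compact [set: T]) (hU : hausdorff_space U) (cp : continuous p).

Lemma closed_image (C : set T) : closed C -> closed (p @` C).
Proof.
move=> cC; apply: compact_closed => //; apply: continuous_compact.
  exact: continuous_subspaceT.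
by rewrite -[C]setTI; apply: compact_closedI.
Qed.

Lemma continuous_factor {Z : topologicalType} (g : U -> Z) :
  (forall u, exists t, p t = u) -> continuous (g \o p) -> continuous g.
Proof.
move=> sp /continuous_closedP cgp; apply/continuous_closedP => C cC.
have -> : g @^-1` C = p @` ((g \o p) @^-1` C).
  apply/seteqP; split=> [u gu|_ [t gpt <-] //].
  by have [t pt] := sp u; exists t; rewrite //= pt.
exact: closed_image (cgp _ cC).
Qed.

Lemma fiber_tube (u : U) (C V : set T) : closed C -> open V ->
  (forall t, p t = u -> C t -> V t) ->
  exists B, [/\ open B, B u & forall t, B (p t) -> C t -> V t].
Proof.
move=> cC oV CV; exists (~` (p @` (C `\` V))); split.
- apply/closed_openC/closed_image; rewrite setDE.
  by apply: closedI => //; exact: open_closedC.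
- by case=> t [Ct nVt] ptu; exact/nVt/CV.
- by move=> t Bt Ct; apply: contrapT => nVt; apply: Bt; exists t.
Qed.

End ClosedMaps.

(* The library proves this for pointed spaces; [t0] supplies the point. *)
Lemma compact_cover_compact {T : topologicalType} (t0 : T) (A : set T) :
  compact A -> cover_compact A.
Proof.
pose T' := HB.pack_for ptopologicalType T (isPointed.Build T t0).
by move=> cA; have : @compact T' A by []; rewrite compact_cover.
Qed.

Lemma limn_esup_eq0P {R : realType} (u : nat -> R) : (forall n, 0 <= u n) ->
  limn_esup (fun n => (u n)%:E) = 0%E <->
  (forall e, 0 < e -> \forall n \near \oo, u n <= e).
Proof.
move=> u0; have norm_u n : `|0 - u n| = u n by rewrite sub0r normrN ger0_norm.
split=> [u_esup0 e e0|u_small].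
  have /fine_cvg/cvgrPdist_le/(_ e e0) : (fun n => (u n)%:E) @ \oo --> 0%E.
    by apply: limn_esup_le_cvg; [rewrite u_esup0|move=> n; rewrite lee_fin].
  by apply: filterS => n; rewrite norm_u.
have u_cvg0 : u @ \oo --> 0.
  by apply/cvgrPdist_le => e /u_small; apply: filterS => n; rewrite norm_u.
have /cvg_limn_einf_sup[] // : (fun n => (u n)%:E) @ \oo --> 0%E.
by apply: cvg_EFin u_cvg0; exact: nearW.
Qed.

Lemma ln_poly_growth_div_le {R : realType} (K d : nat) (e : R) : 0 < e ->
  \forall n \near \oo, d%:R * ln ((K * n.+1).+1)%:R / n%:R <= e.
Proof.
move=> e0; pose C := (2 * K + 1)%N; pose eps := e / (d%:R + 1).
have d1 : (0 : R) < d%:R + 1 by rewrite ltr_wpDl.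
have eps0 : 0 < eps by rewrite divr_gt0.
pose N := (Num.truncn (2 * C%:R / eps ^+ 2)).+1.
have NC : 2 * C%:R <= N%:R * eps ^+ 2.
  by rewrite -ler_pdivrMr ?exprn_gt0 // ltW // Num.Theory.truncnS_gt.
near=> n.
have Nn : (N <= n)%N by near: n; exists N.
have n0 : (0 : R) < n%:R by rewrite ltr0n (leq_trans _ Nn).
(* [exp x >= x^2 / 2] and [n >= 2 C / eps^2] give [C n <= exp (eps n)]. *)
have ln_le : ln ((K * n.+1).+1)%:R <= eps * n%:R.
  rewrite -[leRHS]expRK ler_ln ?posrE ?expR_gt0 ?ltr0n //.
  have : ((K * n.+1).+1)%:R <= C%:R * n%:R :> R by rewrite -natrM ler_nat /C; nia.
  move/le_trans; apply; apply: le_trans (expR_ge1Dxn 1 _); last first.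
    by rewrite mulr_ge0 // ltW.
  have nN : (N%:R : R) <= n%:R by rewrite ler_nat.
  rewrite [_`!%:R]/= -[(2`!)%:R]/2; have C0 : (0 : R) <= C%:R by [].
  nra.
rewrite ler_pdivrMr //; apply: le_trans (_ : d%:R * (eps * n%:R) <= _).
  by rewrite ler_wpM2l.
by rewrite mulrA ler_pM2r // /eps mulrA ler_pdivrMr // mulrC ler_pM2l // lerDl.
Unshelve. all: by end_near. Qed.

Lemma ler_ln_nat {R : realType} (m n : nat) : (m <= n)%N -> ln (m%:R : R) <= ln n%:R.
Proof.
case: m => [|m] mn; last by rewrite ler_ln ?posrE ?ltr0n ?ler_nat // (leq_trans _ mn).
by rewrite ln0 //; case: n {mn} => [|n]; [rewrite ln0 | rewrite ln_ge0 // ler1n].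
Qed.

Lemma cover_range {T I : Type} (B : I -> set T) :
  setT `<=` \bigcup_(i in setT) B i -> setT `<=` \bigcup_(A in range B) A.
Proof. by move=> covB x _; rewrite bigcup_image; exact: covB. Qed.

Section CoveringNumbers.
Context {X : topologicalType} (R : realType).
Implicit Types (V : set (set X)).

Definition has_subcover V m :=
  exists F : 'I_m -> set X, (forall j, V (F j)) /\ setT `<=` \bigcup_(j in setT) F j.

Lemma has_subcover_fin V (J : finType) (F : J -> set X) :
  (forall i, V (F i)) -> setT `<=` \bigcup_(i in setT) F i -> has_subcover V #|J|.
Proof.
move=> VF cov; exists (fun j => F (enum_val j)); split=> [j|x _]; first exact: VF.
by have [i _ Fi] := cov x I; exists (enum_rank i); rewrite ?enum_rankK.
Qed.

Lemma has_subcover_gt0 V m (x : X) : has_subcover V m -> (0 < m)%N.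
Proof. by case: m => // -[F [_ /(_ x I)[[]]]]. Qed.

Lemma Ncov_min V m : has_subcover V m -> exists N, [/\ has_subcover V N,
  Ncov R V = N%:R%:E & forall m', has_subcover V m' -> (N <= m')%N].
Proof.
move=> Vm; have Vex : exists n, `[< has_subcover V n >] by exists m; apply/asboolP.
case: (ex_minnP Vex) => N /asboolP VN N_min.
exists N; split=> // [|m' /asboolP/N_min//].
apply/eqP; rewrite eq_le; apply/andP; split; first by apply: ereal_inf_lbound; exists N.
apply: le_ereal_inf_tmp => _ [m' /asboolP/N_min Nm' <-].
by rewrite lee_fin ler_nat.
Qed.

Lemma ln_Ncov_ge0 V : 0 <= ln (fine (Ncov R V)).
Proof.
(* Without a finite subcover, [Ncov R V = +oo], whose [fine] is [0 = ln 0]. *)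
have [[m /Ncov_min[N [_ -> _]]]|noV] := pselect (exists m, has_subcover V m).
  by apply: le_trans (ler_ln_nat (leq0n N)); rewrite ln0.
rewrite /Ncov (_ : [set _ | n in _] = set0) ?ereal_inf0 /= ?ln0 //.
by apply/seteqP; split=> // t [n Vn _]; apply: noV; exists n.
Qed.

Variables (G : groupType) (a : G -> X -> X).

Lemma join_cover_has_subcover U s n : finite_set U ->
  setT `<=` \bigcup_(A in U) A -> exists m, has_subcover (join_cover a U s n) m.
Proof.
move=> /finite_fsetP[B ->] cov.
pose F (phi : {ffun 'I_n.+1 -> B}) :=
  \bigcap_(i in [set i : nat | (0 < i <= n)%N]) (a (s i) @^-1` val (phi (inord i))).
exists #|{ffun 'I_n.+1 -> B}|; apply: (@has_subcover_fin _ _ F).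
  by move=> phi; exists (fun i => val (phi (inord i))); split=> // i _; exact: fsvalP.
move=> x _; have /fin_all_exists[phi phiP] : forall i : 'I_n.+1,
    exists A : B, val A (a (s i) x).
  by move=> i; have [A BA Ax] := cov (a (s i) x) I; exists [` BA]%fset.
exists [ffun i => phi i] => // i /= /andP[i0 iN]; rewrite ffunE.
by have := phiP (inord i); rewrite inordK // ltnS.
Qed.

Definition cover_rate U s n : R := ln (fine (Ncov R (join_cover a U s n))) / n%:R.

Lemma cover_rate_ge0 U s n : 0 <= cover_rate U s n.
Proof. exact: divr_ge0 (ln_Ncov_ge0 _) (ler0n _ _). Qed.

Lemma null_actionP : null_action R a <->
  forall s U, finite_set U -> (forall A, U A -> open A) ->
  setT `<=` \bigcup_(A in U) A ->
  forall e, 0 < e -> \forall n \near \oo, cover_rate U s n <= e.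
Proof.
by split=> null s U fU oU cU; [apply/(limn_esup_eq0P (cover_rate_ge0 U s))|
  apply/(limn_esup_eq0P (cover_rate_ge0 U s))]; exact: null.
Qed.

End CoveringNumbers.

Section FactorMaps.
Variables (R : realType) (G : groupType) (X Y : topologicalType).
Variables (a : G -> X -> X) (b : G -> Y -> Y) (pi : Y -> X).
Hypotheses (cpi : continuous pi) (spi : forall x, exists y, pi y = x)
  (epi : forall g y, pi (b g y) = a g (pi y)).

Lemma cover_preimage (U : set (set X)) : setT `<=` \bigcup_(A in U) A ->
  setT `<=` \bigcup_(A in [set pi @^-1` A | A in U]) A.
Proof. by move=> covU y _; rewrite bigcup_image -preimage_bigcup; exact: covU. Qed.

Lemma join_cover_preimage U s n C :
  join_cover b [set pi @^-1` A | A in U] s n C ->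
  exists2 D, join_cover a U s n D & C = pi @^-1` D.
Proof.
case=> W [UW ->].
have [A UA] : {A : nat -> set X &
    forall i, (0 < i <= n)%N -> U (A i) /\ W i = pi @^-1` A i}.
  apply: (@choice _ _ (fun i A => (0 < i <= n)%N -> U A /\ W i = pi @^-1` A)).
  move=> i; have [/UW[A UA <-]|_] := boolP (0 < i <= n)%N; last by exists setT.
  by exists A.
exists (\bigcap_(i in [set i | (0 < i <= n)%N]) (a (s i) @^-1` A i)).
  by exists A; split=> // i /UA[].
by apply/seteqP; split=> y yW i /[dup] /UA[_ WA] /yW; rewrite /= WA /= epi.
Qed.

Lemma has_subcover_join_preimage U s n m :
  has_subcover (join_cover b [set pi @^-1` A | A in U] s n) m ->
  has_subcover (join_cover a U s n) m.
Proof.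
case=> F [JF covF].
have /fin_all_exists[D DP] : forall j, exists D,
    join_cover a U s n D /\ F j = pi @^-1` D.
  by move=> j; have [D ? ?] := join_cover_preimage (JF j); exists D.
exists D; split=> [j|x _]; first by case: (DP j).
have [y pyx] := spi x; have [j _ Fy] := covF y I.
by exists j => //; move: Fy; case: (DP j) => _ ->; rewrite /= pyx.
Qed.

Lemma cover_rate_factor U s n : finite_set U -> setT `<=` \bigcup_(A in U) A ->
  cover_rate R a U s n <= cover_rate R b [set pi @^-1` A | A in U] s n.
Proof.
move=> fU /cover_preimage covU'; rewrite /cover_rate.
have [mY /(Ncov_min R)[NY [/has_subcover_join_preimage YX -> _]]] :=
  join_cover_has_subcover b s n (finite_image _ fU) covU'.
have [NX [_ -> minX]] := Ncov_min R YX.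
by rewrite ler_wpM2r ?invr_ge0 // ler_ln_nat // minX.
Qed.

Lemma null_factor : null_action R b -> null_action R a.
Proof.
move=> /null_actionP nullb; apply/null_actionP => s U fU oU covU e e0.
have oU' A : [set pi @^-1` A | A in U] A -> open A.
  by case=> B UB <-; exact: (continuousP _).1 cpi _ (oU _ UB).
apply: filterS (nullb s _ (finite_image _ fU) oU' (cover_preimage covU) e e0) => n.
exact/le_trans/cover_rate_factor.
Qed.

End FactorMaps.

Lemma join_sign_cover_lb {R : realType} {G : groupType} {Y : topologicalType}
    (b : G -> Y -> Y) (ft : Y -> R) s n m (e : 'I_m -> nat) N :
  (forall j, (0 < e j <= n)%N) ->
  (forall w : {ffun 'I_m -> bool},
     exists y, forall j, (0 < ft (b (s (e j)) y)) = w j) ->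
  has_subcover (join_cover b [set [set y | 0 < ft y]; [set y | ft y < 0]] s n) N ->
  (2 ^ m <= N)%N.
Proof.
move=> e_range /choice[y yw] [F [JF covF]].
have /fin_all_exists[phi phiP] : forall w, exists j, F j (y w).
  by move=> w; have [j _ Fj] := covF (y w) I; exists j.
suff /leq_card : injective phi by rewrite card_ffun card_bool !card_ord.
move=> w w' phiww'; apply/ffunP => j; rewrite -(yw w j) -(yw w' j).
have [W [sW FE]] := JF (phi w); have := phiP w'; have := phiP w.
rewrite -phiww' FE => /(_ _ (e_range j)) yj /(_ _ (e_range j)) y'j.
case: (sW _ (e_range j)) yj y'j => -> /= yj y'j; first by rewrite yj y'j.
by rewrite ltNge (ltW yj) ltNge (ltW y'j).
Qed.

Definition block_seq (T : Type) (t0 : T) (e : forall k, 'I_(2 ^ k) -> T) (i : nat) :=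
  let k := trunc_log 2 i in odflt t0 (omap (e k) (insub (i - 2 ^ k)%N)).

Lemma block_seqE T t0 e k (j : 'I_(2 ^ k)) : @block_seq T t0 e (2 ^ k + j) = e k j.
Proof.
rewrite /block_seq (@trunc_log_eq 2 k) //; last first.
  by rewrite leq_addr /= expnS mul2n -addnn ltn_add2l.
by rewrite addKn insubT //= => jk; congr (e k _); exact: val_inj.
Qed.

Section McMahon.
Variables (R : realType) (G : groupType) (X Y : pseudoMetricType R).
Variables (a : G -> X -> X) (b : G -> Y -> Y) (pi : Y -> X).
Variables (x1 : X) (f : X -> R) (ft : Y -> R).
Hypotheses (hX : hausdorff_space X) (cX : compact [set: X]) (cY : compact [set: Y])
  (ca : continuous_action a) (cb : continuous_action b) (mb : minimal_action b)
  (cpi : continuous pi) (spi : forall x, exists y, pi y = x)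
  (epi : forall g y, pi (b g y) = a g (pi y))
  (fib1 : forall x, ~ act_orbit a x1 x -> exists y, pi @^-1` [set x] = [set y])
  (fib2 : forall x, act_orbit a x1 x ->
     exists y1 y2, y1 <> y2 /\ pi @^-1` [set x] = [set y1; y2])
  (fnext : ~ (exists g : X -> R, continuous g /\ forall x, x <> x1 -> g x = f x))
  (orb2 : exists x y : X, ~ act_orbit a x y)
  (ftc : continuous ft) (ftpm : forall y, ft y = 1 \/ ft y = -1)
  (ftf : forall y, pi y <> x1 -> ft y = f (pi y)).

Let sec x := projT1 (cid (spi x)).
Let secK x : pi (sec x) = x. Proof. exact: projT2 (cid (spi x)). Qed.

Let act_a : is_action a. Proof. by case: ca. Qed.
Let act_b : is_action b. Proof. by case: cb. Qed.

Lemma open_ft_sign h c : open [set y | (0 < ft (b h y)) = c].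
Proof.
have oc : open [set y | (0 < ft y) = c].
  have -> : [set y | (0 < ft y) = c] = ft @^-1` [set r | if c then 0 < r else r < 0].
    apply/seteqP; split=> y /=; case: c; case: (ftpm y) => ->;
      by rewrite ?ltr01 ?oppr_gt0 ?oppr_lt0 ?ltr10.
  case: c; [exact: (continuousP _).1 ftc _ (@open_gt R 0)|].
  exact: (continuousP _).1 ftc _ (@open_lt R 0).
by apply: (continuousP _).1 oc; case: cb.
Qed.

Lemma ft_fiber_x1_inj z1 z2 :
  pi z1 = x1 -> pi z2 = x1 -> z1 <> z2 -> ft z1 <> ft z2.
Proof.
(* Otherwise [ft] factors through [pi] and gives a continuous extension of [f]. *)
move=> pz1 pz2 z12 fz12; apply: fnext; exists (ft \o sec); split; last first.
  by move=> x xx1; rewrite /= ftf secK.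
have [y1 [y2 [y12 fibE]]] := fib2 (act_orbit_refl act_a x1).
have fiber_x1 y : pi y = x1 -> y = y1 \/ y = y2.
  by move=> pyx1; have : (pi @^-1` [set x1]) y by []; rewrite fibE.
have ft_x1 y y' : pi y = x1 -> pi y' = x1 -> ft y = ft y'.
  have ft12 : ft y1 = ft y2.
    move: fz12 z12; case: (fiber_x1 _ pz1) => ->; case: (fiber_x1 _ pz2) => ->;
      by [|move=> ->|move=> _ /(_ erefl)].
  by move=> /fiber_x1[] -> /fiber_x1[] ->; rewrite ?ft12.
apply: (continuous_factor cY hX cpi spi); suff -> : (ft \o sec) \o pi = ft by [].
apply/funext => y; rewrite /comp; have [pyx1|pyx1] := pselect (pi y = x1).
  by apply: ft_x1; rewrite ?secK.
by rewrite (ftf pyx1) ftf secK.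
Qed.

Lemma closed_ft_sign h c : closed [set y | (0 < ft (b h y)) = c].
Proof.
rewrite (_ : [set y | _] = ~` [set y | (0 < ft (b h y)) = ~~ c]).
  exact/open_closedC/open_ft_sign.
by apply/seteqP; split=> y /=; case: c; case: (0 < ft (b h y)).
Qed.

Definition sign_refines (U : set (set Y)) (B : set X) (h : G) (Up Um : set Y) :=
  [/\ U Up, U Um & forall y, B (pi y) -> (if 0 < ft (b h y) then Up else Um) y].

Section SignRefinement.
Variable U : set (set Y).
Hypotheses (oU : forall A, U A -> open A) (covU : setT `<=` \bigcup_(A in U) A).

Lemma sign_refines_not_orbit x : ~ act_orbit a x1 x ->
  exists B h Up Um, [/\ open B, B x & sign_refines U B h Up Um].
Proof.
move=> nx; have [y0 fibE] := fib1 nx; have [U0 UU0 U0y0] := @covU y0 I.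
have [|B [oB Bx BU0]] := fiber_tube cY hX cpi closedT (oU UU0) (u := x).
  by move=> y pyx _; have : (pi @^-1` [set x]) y by []; rewrite fibE => ->.
by exists B, 1%g, U0, U0; split=> //; split=> // y By; rewrite if_same; exact: BU0.
Qed.

Lemma sign_refines_orbit x : act_orbit a x1 x ->
  exists B h Up Um, [/\ open B, B x & sign_refines U B h Up Um].
Proof.
move=> /[dup] ox [g _ gx1]; pose h := g^-1%g.
have [yp [ym [fibE pos neg]]] : exists yp ym, [/\ pi @^-1` [set x] = [set yp; ym],
    0 < ft (b h yp) & ft (b h ym) < 0].
  have [y1 [y2 [y12 fibE]]] := fib2 ox.
  have to_x1 y : (pi @^-1` [set x]) y -> pi (b h y) = x1.
    by move=> pyx; rewrite epi pyx -gx1 actKV.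
  have py1 : (pi @^-1` [set x]) y1 by rewrite fibE; left.
  have py2 : (pi @^-1` [set x]) y2 by rewrite fibE; right.
  have := ft_fiber_x1_inj (to_x1 _ py1) (to_x1 _ py2) (fun e => y12 (act_inj act_b e)).
  case: (ftpm (b h y1)) (ftpm (b h y2)) => e1 [] e2; rewrite e1 e2 => ne;
    try by case: (ne erefl).
    by exists y1, y2; rewrite fibE e1 e2 ltr01 oppr_lt0 ltr01.
  by exists y2, y1; rewrite fibE setUC e1 e2 ltr01 oppr_lt0 ltr01.
have fiber_x y : pi y = x -> y = yp \/ y = ym.
  by move=> pyx; have : (pi @^-1` [set x]) y by []; rewrite fibE.
have [Up UUp Upyp] := @covU yp I; have [Um UUm Umym] := @covU ym I.
have [|Bp [oBp Bpx BpUp]] :=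
    fiber_tube cY hX cpi (closed_ft_sign (h := h) (c := true)) (oU UUp) (u := x).
  by move=> y /fiber_x[]->; rewrite //= ltNge ltW.
have [|Bm [oBm Bmx BmUm]] :=
    fiber_tube cY hX cpi (closed_ft_sign (h := h) (c := false)) (oU UUm) (u := x).
  by move=> y /fiber_x[]->; rewrite //= pos.
exists (Bp `&` Bm), h, Up, Um; split=> //; first exact: openI.
by split=> // y [Bpy Bmy]; case: ifP => sgn; [exact: BpUp | exact: BmUm].
Qed.

Lemma finite_sign_refinement : exists (T : finType) (B : T -> set X) (h : T -> G)
    (Up Um : T -> set Y), [/\ setT `<=` \bigcup_(t in setT) B t,
  forall t, open (B t) & forall t, sign_refines U (B t) (h t) (Up t) (Um t)].
Proof.
have /choice[Q QP] : forall x, exists q : (set X * G) * (set Y * set Y),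
    [/\ open q.1.1, q.1.1 x & sign_refines U q.1.1 q.1.2 q.2.1 q.2.2].
  move=> x; have [ox|nox] := pselect (act_orbit a x1 x).
    by have [B [h [Up [Um ?]]]] := sign_refines_orbit ox; exists ((B, h), (Up, Um)).
  by have [B [h [Up [Um ?]]]] := sign_refines_not_orbit nox; exists ((B, h), (Up, Um)).
have oQ x : setT x -> open (Q x).1.1 by case: (QP x).
have covQ : setT `<=` \bigcup_(x in setT) (Q x).1.1.
  by move=> x _; exists x => //; case: (QP x).
have [D _ covD] := compact_cover_compact x1 cX oQ covQ.
exists D, (fun t => (Q (val t)).1.1), (fun t => (Q (val t)).1.2).
exists (fun t => (Q (val t)).2.1), (fun t => (Q (val t)).2.2); split.
- by move=> x _; have [x' Dx' Qx'] := covD x I; exists [` Dx']%fset.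
- by move=> t; case: (QP (val t)).
- by move=> t; case: (QP (val t)).
Qed.

End SignRefinement.

Definition Xplus := [set x | x <> x1 /\ f x = 1].
Definition Xminus := [set x | x <> x1 /\ f x = -1].

Definition sign_shattered (M : set G) :=
  forall w : G -> bool, exists y, forall t, M t -> (0 < ft (b t y)) = w t.

Lemma ft_sign_Xpm t y (c : bool) : a t (pi y) <> x1 ->
  (0 < ft (b t y)) = c <-> (if c then Xplus else Xminus) (a t (pi y)).
Proof.
move=> ne; have fE : f (a t (pi y)) = ft (b t y) by rewrite ftf epi.
case: c; rewrite /Xplus /Xminus /= fE; case: (ftpm (b t y)) => ->;
  rewrite ?ltr01 ?oppr_gt0 ?ltr10; split=> // -[_]; lra.
Qed.

Lemma sign_shattered_indep M : finite_set M -> sign_shattered M ->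
  indep_set a Xplus Xminus M.
Proof.
move=> fM shM F _ _ FM w; have [y0 y0w] := shM w.
have [x nz] := exists_not_act_orbit act_a x1 orb2.
have [z pzx] := spi x; rewrite -pzx in nz.
have : nbhs y0 (\bigcap_(t in [set` fset_set M]) [set y | (0 < ft (b t y)) = w t]).
  apply: filter_bigI => t; rewrite in_fset_set // => /set_mem Mt.
  by apply: open_nbhs_nbhs; split; [exact: open_ft_sign | rewrite /= y0w].
have : closure (act_orbit b z) y0 by rewrite mb.
move=> /[apply] -[_ [[g _ <-] gw]]; exists (pi (b g z)) => t /FM Mt.
have ne : a t (pi (b g z)) <> x1.
  move=> tgz; apply/nz/(act_orbit_act act_a _ _ g)/(act_orbit_act act_a _ _ t).
  by rewrite -epi tgz; exact: act_orbit_refl.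
apply: (ft_sign_Xpm (w t) ne).1.
by apply: gw; rewrite /= in_fset_set //; exact: mem_set.
Qed.

Lemma indep_sign_shattered M : finite_set M -> indep_set a Xplus Xminus M ->
  sign_shattered M.
Proof.
move=> fM indM w; have [M0|M0] := pselect (M !=set0); last first.
  by exists (sec x1) => t Mt; exfalso; apply: M0; exists t.
have [x xw] := indM M fM M0 (@subset_refl _ M) w.
have [y pyx] := spi x; rewrite -pyx in xw.
exists y => t /xw Xw; have ne : a t (pi y) <> x1 by case: (w t) Xw => -[].
exact: (ft_sign_Xpm (w t) ne).2.
Qed.

Lemma null_no_large_indep : null_action R b -> ~ arb_large_indep a Xplus Xminus.
Proof.
move=> /null_actionP nullb large.
have shk k : exists e : 'I_(2 ^ k) -> G,
    forall w : {ffun 'I_(2 ^ k) -> bool},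
    exists y, forall j, (0 < ft (b (e j) y)) = w j.
  have [M [fM indM [e [ie eM]]]] := large (2 ^ k)%N.
  have ind_e : indep_set a Xplus Xminus (range e).
    by move=> F fF F0 Fe; apply: indM => //; exact: subset_trans Fe eM.
  exists e => w; pose w' t := `[< exists j, e j = t /\ w j >].
  have [y yw] := indep_sign_shattered (finite_image e finite_finset) ind_e w'.
  exists y => j; rewrite yw; last by exists j.
  apply/asboolP/idP => [[j' [/ie -> //]]|wj]; by exists j.
pose e k := projT1 (cid (shk k)); have eP k := projT2 (cid (shk k)).
pose s := block_seq 1%g e; pose U := [set [set y | 0 < ft y]; [set y | ft y < 0]].
have fU : finite_set U by exact: finite_set2.
have oU A : U A -> open A.
  by case=> ->; [exact: (continuousP _).1 ftc _ (@open_gt R 0)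
                |exact: (continuousP _).1 ftc _ (@open_lt R 0)].
have covU : setT `<=` \bigcup_(A in U) A.
  move=> y _; case: (ftpm y) => fty; [exists [set y | 0 < ft y]; [left|]
    |exists [set y | ft y < 0]; [right|]]; by rewrite //= fty ?oppr_lt0 ltr01.
(* The [k]-th block of [s] sits at indices [2^k <= i < 2^(k+1)] and realises
   [2^(2^k)] sign patterns, so the join of length [2^(k+1) - 1] needs as many sets. *)
have ln2 : 0 < ln (2 : R) by rewrite ln_gt0 // ltr1n.
have [k _ small] := nullb s U fU oU covU (ln 2 / 4) (divr_gt0 ln2 (ltr0n _ 4)).
pose n := (2 ^ k.+1).-1.
have k0 : (0 < 2 ^ k)%N by rewrite expn_gt0.
have n_eq : n = (2 ^ k + (2 ^ k).-1)%N by rewrite /n expnS; lia.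
have [m /(Ncov_min R)[N [bN NE _]]] := join_cover_has_subcover b s n fU covU.
have lbN : (2 ^ 2 ^ k <= N)%N.
  apply: (join_sign_cover_lb (e := fun j : 'I_(2 ^ k) => (2 ^ k + j)%N) _ _ bN).
    by move=> j; rewrite n_eq; have := ltn_ord j; lia.
  by move=> w; have [y yw] := eP k w; exists y => j; rewrite /s block_seqE; exact: yw.
have n0 : (0 < n)%N by rewrite n_eq addn_gt0 expn_gt0.
have kn : (k <= n)%N by rewrite n_eq; have := ltn_expl k (ltnSn 1); lia.
have := small n kn; rewrite /cover_rate NE /= ler_pdivrMr ?ltr0n // => rate_le.
have lnN : (2 ^ k)%:R * ln 2 <= ln (N%:R : R).
  by apply: le_trans (ler_ln_nat lbN); rewrite [X in _ <= ln X]natrX lnXn // mulr_natl.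
have : ln 2 / 4 * n%:R <= ln 2 / 4 * (2 * (2 ^ k)%:R) :> R.
  by rewrite ler_pM2l ?divr_gt0 ?ltr0n // -natrM ler_nat n_eq; lia.
have : 0 < ln 2 * (2 ^ k)%:R :> R by rewrite mulr_gt0 // ltr0n.
lra.
Qed.

Definition indep_card_lt n0 :=
  forall M, finite_set M -> indep_set a Xplus Xminus M ->
  forall e : 'I_n0 -> G, injective e -> ~ range e `<=` M.

Section SignPatterns.
Variables (T : finType) (B : T -> set X) (h : T -> G) (Up Um : T -> set Y).
Variable U : set (set Y).
Hypotheses (covB : setT `<=` \bigcup_(t in setT) B t)
  (refB : forall t, sign_refines U (B t) (h t) (Up t) (Um t)).
Variables (s : nat -> G) (n : nat).

Definition sign_pattern (y : Y) : {ffun T * 'I_n.+1 -> bool} :=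
  [ffun q : T * 'I_n.+1 => 0 < ft (b (h q.1 * s q.2)%g y)].

Definition sign_patterns := [set p | `[< exists y, sign_pattern y = p >]]%SET.

Lemma sign_patternsP p : p \in sign_patterns <-> exists y, sign_pattern y = p.
Proof. by rewrite /sign_patterns inE asboolE. Qed.

Lemma join_cover_range C : join_cover a (range B) s n C ->
  exists tj : nat -> T,
    C = \bigcap_(i in [set i | (0 < i <= n)%N]) (a (s i) @^-1` B (tj i)).
Proof.
case=> W [BW ->]; have [t0 _ _] := @covB x1 I.
have /choice[tj tjP] : forall i, exists t, (0 < i <= n)%N -> W i = B t.
  move=> i; have [/BW[t _ <-]|_] := boolP (0 < i <= n)%N; last by exists t0.
  by exists t.
by exists tj; apply: eq_bigcapr => i /tjP ->.
Qed.

Lemma has_subcover_sign_patterns NX : has_subcover (join_cover a (range B) s n) NX ->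
  has_subcover (join_cover b U s n) (NX * #|sign_patterns|).
Proof.
case=> FX [JFX covFX].
have /fin_all_exists[tj tjP] := fun j => join_cover_range (JFX j).
pose FY (jp : 'I_NX * {p | p \in sign_patterns}) :=
  \bigcap_(i in [set i | (0 < i <= n)%N]) (b (s i) @^-1`
    (if val jp.2 (tj jp.1 i, inord i) then Up (tj jp.1 i) else Um (tj jp.1 i))).
have -> : (NX * #|sign_patterns|)%N = #|{: 'I_NX * {p | p \in sign_patterns}}|.
  by rewrite card_prod card_ord card_sig.
apply: (@has_subcover_fin _ _ _ FY) => [jp|y _].
  exists (fun i =>
    if val jp.2 (tj jp.1 i, inord i) then Up (tj jp.1 i) else Um (tj jp.1 i)).
  by split=> // i _; case: (refB (tj jp.1 i)) => UUp UUm _; case: ifP.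
have [j _ FXj] := covFX (pi y) I.
have yS : sign_pattern y \in sign_patterns by apply/sign_patternsP; exists y.
exists (j, exist _ (sign_pattern y) yS) => // i i_range.
have := FXj; rewrite tjP => /(_ i i_range) /= Bpy.
case: (refB (tj j i)) => _ _ /(_ (b (s i) y)); rewrite epi => /(_ Bpy).
rewrite ffunE /= inordK ?actM //; by case/andP: i_range.
Qed.

Lemma shatters_sign_patterns_lt n0 E : indep_card_lt n0 ->
  shatters sign_patterns E -> (#|E| < n0)%N.
Proof.
move=> small /forallP shE; rewrite ltnNge; apply/negP => n0E.
pose tau (q : T * 'I_n.+1) := (h q.1 * s q.2)%g.
have realize (g : {ffun T * 'I_n.+1 -> bool}) :
    exists y, forall q, q \in E -> (0 < ft (b (tau q) y)) = g q.
  have /exists_inP[_ /sign_patternsP[y <-] /forall_inP yg] := shE g.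
  by exists y => q /yg /eqP; rewrite ffunE.
have tau_inj : {in E &, injective tau}.
  move=> q q' qE q'E tauq; apply: contrapT => qq'.
  have [y yq] := realize [ffun u => u == q].
  have := yq q' q'E; rewrite -tauq yq // !ffunE eqxx => /esym/eqP q'q.
  exact/qq'/esym.
pose M := tau @` [set q | q \in E].
have /sign_shattered_indep indM : sign_shattered M.
  move=> w; have [y yw] := realize [ffun q => w (tau q)].
  by exists y => _ [q qE <-]; rewrite yw // ffunE.
pose e j := tau (@enum_val _ (mem E) (widen_ord n0E j)).
apply: (small M (finite_image _ finite_finset) (indM (finite_image _ finite_finset)) e).
  move=> j j' /(tau_inj _ _ (enum_valP _) (enum_valP _)) /enum_val_inj.
  by move=> /(congr1 val) /= /val_inj.
by move=> _ [j _ <-]; exists (enum_val (widen_ord n0E j)) => //; exact: enum_valP.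
Qed.

Lemma cover_rate_sign_patterns_le n0 : indep_card_lt n0 ->
  cover_rate R b U s n <=
  cover_rate R a (range B) s n + n0%:R * ln ((#|T| * n.+1).+1)%:R / n%:R.
Proof.
move=> small; have fB : finite_set (range B) by exact: finite_image.
have [mX /(Ncov_min R)[NX [XNX NXE _]]] :=
  join_cover_has_subcover a s n fB (cover_range covB).
have [NY [_ NYE minY]] := Ncov_min R (has_subcover_sign_patterns XNX).
have cardS : (#|sign_patterns| <= (#|T| * n.+1).+1 ^ n0)%N.
  have -> : (#|T| * n.+1)%N = #|{: T * 'I_n.+1}| by rewrite card_prod card_ord.
  by apply: sauer_shelah => E /(shatters_sign_patterns_lt small)/ltnW.
have NX0 : (0 < NX)%N := has_subcover_gt0 x1 XNX.
have S0 : (0 < #|sign_patterns|)%N.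
  apply/card_gt0P; exists (sign_pattern (sec x1)).
  by apply/sign_patternsP; exists (sec x1).
rewrite /cover_rate NYE NXE /= -mulrDl; apply: ler_wpM2r; first by rewrite invr_ge0.
apply: le_trans (ler_ln_nat (minY _ (has_subcover_sign_patterns XNX))) _.
rewrite natrM lnM ?posrE ?ltr0n // lerD2l.
apply: le_trans (ler_ln_nat cardS) _.
by rewrite natrX lnXn ?ltr0n // mulr_natl.
Qed.

End SignPatterns.

Lemma null_of_small_indep : null_action R a -> ~ arb_large_indep a Xplus Xminus ->
  null_action R b.
Proof.
move=> /null_actionP nulla no_large; apply/null_actionP => s U fU oU covU e e0.
have [n0 small] : exists n0, indep_card_lt n0.
  apply: contrapT => no_n0; apply: no_large => n; apply: contrapT => no_M.
  apply: no_n0; exists n => M fM indM g ig gM; apply: no_M.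
  by exists M; split=> //; exists g.
have [T [B [h [Up [Um [covB oB refB]]]]]] := finite_sign_refinement oU covU.
have e2 : 0 < e / 2 by rewrite divr_gt0.
have oB' A : range B A -> open A by case=> t _ <-.
have smallX :=
  nulla s (range B) (finite_image _ finite_finset) oB' (cover_range covB) _ e2.
have smallP := ln_poly_growth_div_le #|T| n0 e2.
near=> n; apply: le_trans (cover_rate_sign_patterns_le covB refB s n small) _.
have : cover_rate R a (range B) s n <= e / 2 by near: n.
have : n0%:R * ln ((#|T| * n.+1).+1)%:R / n%:R <= e / 2 by near: n.
lra.
Unshelve. all: by end_near. Qed.

End McMahon.

Theorem proposition3p1
  (R : realType) (G : groupType)
  (X : pseudoMetricType R) (a : G -> X -> X)
  (x1 : X) (f : X -> R)
  (Y : pseudoMetricType R) (b : G -> Y -> Y) (pi : Y -> X) :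
  (* Gamma countably infinite *)
  countable [set: G] -> infinite_set [set: G] ->
  (* X compact metrizable (a compact Hausdorff metric space) *)
  hausdorff_space X -> compact [set: X] ->
  (* minimal continuous action with more than one orbit *)
  continuous_action a -> minimal_action a ->
  (exists x y : X, ~ act_orbit a x y) ->
  (* x1 has trivial stabilizer *)
  (forall g : G, a g x1 = x1 -> g = 1%g) ->
  (* f : X \ {x1} -> {1,-1} continuous, not extendable continuously to X *)
  (forall x, x <> x1 -> f x = 1 \/ f x = -1) ->
  {within ~` [set x1], continuous f} ->
  ~ (exists g : X -> R, continuous g /\ forall x, x <> x1 -> g x = f x) ->
  (* (Y, b, pi) is the McMahon extension associated to f *)
  hausdorff_space Y -> compact [set: Y] ->
  continuous_action b -> minimal_action b ->
  continuous pi -> (forall x, exists y, pi y = x) ->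
  (forall g y, pi (b g y) = a g (pi y)) ->
  (forall x, ~ act_orbit a x1 x -> exists y, pi @^-1` [set x] = [set y]) ->
  (forall x, act_orbit a x1 x ->
     exists y1 y2, y1 <> y2 /\ pi @^-1` [set x] = [set y1; y2]) ->
  (exists ft : Y -> R, [/\ continuous ft, (forall y, ft y = 1 \/ ft y = -1)
     & forall y, pi y <> x1 -> ft y = f (pi y)]) ->
  (* conclusion *)
  null_action R b <->
  (null_action R a /\
   ~ arb_large_indep a [set x | x <> x1 /\ f x = 1]
                       [set x | x <> x1 /\ f x = -1]).
Proof.
move=> _ _ hX cX ca _ orb2 _ _ _ fnext _ cY cb mb cpi spi epi fib1 fib2.
case=> ft [ftc ftpm ftf]; split=> [nullb|[nulla no_large]].
  split; first exact: null_factor nullb.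
  exact: null_no_large_indep nullb.
exact: null_of_small_indep nulla no_large.
Qed.
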